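(* Let $k\ge1$ and $\ell\ge1$. Then $$\{n\in A_{2k}:\max\mathcal{CG}(n)=\max\mathcal{CG}_2(n)=F_{2k+2\ell}\}=\Big\{m+2F_{2k+2\ell}\ :\ m\in A_{2k},\ m\le\sum_{i=0}^{\ell-1}F_{2k+2i}\Big\}.$$
   Context: Fibonacci numbers: $F_1=F_2=1$, $F_{n+1}=F_n+F_{n-1}$ for $n\ge2$. Chung–Graham decomposition: every positive integer $n$ has a unique representation $n=\sum_{i\ge1}c_iF_{2i}$ with $c_i\in\{0,1,2\}$, only finitely many nonzero, such that whenever $c_i=c_j=2$ with $i<j$ there is $k$ with $i<k<j$ and $c_k=0$. Let $\mathcal{CG}(n)$ be the set of $F_{2i}$ with $c_i\neq0$, $\mathcal{CG}_1(n)$ the set of $F_{2i}$ with $c_i=1$, and $\mathcal{CG}_2(n)$ the set of $F_{2i}$ with $c_i=2$. For $k\ge1$, $A_{2k}=\{n\ge1:\min\mathcal{CG}(n)=F_{2k}\}$. *)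

From mathcomp Require Import all_boot.
Set Implicit Arguments. Unset Strict Implicit. Unset Printing Implicit Defensive.

Fixpoint fib (n : nat) : nat :=
  match n with
  | 0 => 0
  | 1 => 1
  | (m.+1 as p).+1 => fib p + fib m
  end.

(* A candidate Chung–Graham coefficient vector for n: c : 'I_N -> 'I_3, where
   the entry at index i (0-based) is the coefficient c_{i+1} of F_{2(i+1)}. *)
Definition cg_value (N : nat) (c : {ffun 'I_N -> 'I_3}) : nat :=
  \sum_(i < N) (c i : nat) * fib (2 * i.+1).

Definition cg_valid (N : nat) (c : {ffun 'I_N -> 'I_3}) : bool :=
  [forall i : 'I_N, forall j : 'I_N,
     ((i < j) && ((c i : nat) == 2) && ((c j : nat) == 2)) ==>
     [exists k : 'I_N, (i < k) && (k < j) && ((c k : nat) == 0)]].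

(* Since F_{2i} >= i for i >= 1, any
   nonzero coefficient c_i of a decomposition of n has i <= n, so the
   decomposition is a coefficient vector of length n.  By the (cited)
   existence-and-uniqueness theorem, the pick below returns THE decomposition. *)
Definition cg_coeffs (n : nat) : option {ffun 'I_n -> 'I_3} :=
  [pick c : {ffun 'I_n -> 'I_3} | cg_valid c && (cg_value c == n)].

(* cg n i = c_i, the coefficient of F_{2i} (i >= 1) in the decomposition of n. *)
Definition cg (n i : nat) : nat :=
  match cg_coeffs n with
  | Some c => if i is i'.+1 then
                (if insub i' is Some j then (c j : nat) else 0)
              else 0
  | None => 0
  end.

Definition CG (n : nat) : seq nat :=
  [seq fib (2 * i) | i <- iota 1 n & cg n i != 0].
Definition CG1 (n : nat) : seq nat :=
  [seq fib (2 * i) | i <- iota 1 n & cg n i == 1].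
Definition CG2 (n : nat) : seq nat :=
  [seq fib (2 * i) | i <- iota 1 n & cg n i == 2].

Definition is_min (s : seq nat) (x : nat) : Prop :=
  x \in s /\ forall y, y \in s -> x <= y.
Definition is_max (s : seq nat) (x : nat) : Prop :=
  x \in s /\ forall y, y \in s -> y <= x.

Definition A (k n : nat) : Prop := 0 < n /\ is_min (CG n) (fib (2 * k)).

(* Encode a decomposition as a digit function f, with f i the coefficient of F_{2i}.
   If the largest digit of n is a 2 at position t+1, removing it leaves the decomposition
   of m = n - 2 F_{2t+2}; conversely a 2 may be appended at t+1 to the decomposition of m
   exactly when every 2 of m is followed by a 0 at some position <= t ("closed" at t).
   For admissible digits supported on [k, t], being closed at t is equivalent to
   m <= F_{2t+1} - F_{2k-1} = \sum_(0 <= i < t-k+1) F_{2k+2i}, the value of the all-ones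
   string.  The same estimate (value < F_{2j+2} for digits up to j) yields uniqueness of
   the decomposition. *)

From mathcomp Require Import all_boot zify.
From Stdlib Require Import FunctionalExtensionality.
Set Implicit Arguments. Unset Strict Implicit. Unset Printing Implicit Defensive.

Lemma fibSS n : fib n.+2 = fib n.+1 + fib n. Proof. by []. Qed.

Lemma leq_fib : {homo fib : m n / m <= n}.
Proof. by apply: homo_leq => [//|???|[|n]]; [exact: leq_trans | | rewrite fibSS leq_addr]. Qed.

Lemma fib_gt0 n : 0 < n -> 0 < fib n.
Proof. exact: leq_fib 1 n. Qed.

Lemma ltn_fib_even : {homo (fun i => fib (2 * i)) : i j / i < j}.
Proof.
apply: homo_ltn => [???|i]; first exact: ltn_trans.
by rewrite mulnS add2n fibSS -[X in X < _]add0n ltn_add2r fib_gt0.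
Qed.

Lemma leq_fib_even : {mono (fun i => fib (2 * i)) : i j / i <= j}.
Proof. exact: leq_mono ltn_fib_even. Qed.

Lemma fib_even_inj : injective (fun i => fib (2 * i)).
Proof. exact: incn_inj leq_fib_even. Qed.

Lemma leq_fib_even_id i : i <= fib (2 * i).
Proof.
elim: i => // i IH; rewrite mulnS add2n fibSS -addn1 addnC.
by rewrite leq_add // fib_gt0.
Qed.

Lemma sum_fib_even a l :
  \sum_(0 <= i < l) fib (2 * a.+1 + 2 * i) + fib (2 * a).+1 = fib (2 * (a + l)).+1.
Proof.
elim: l => [|l IH]; first by rewrite big_geq ?addn0.
rewrite big_nat_recr // -addnA [X in _ + X]addnC addnA IH.
have -> : 2 * a.+1 + 2 * l = (2 * (a + l)).+2 by lia.
by rewrite addnS mulnS add2n [in RHS]fibSS addnC.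
Qed.

Definition cgsum (f : nat -> nat) (j : nat) : nat := \sum_(i < j.+1) f i * fib (2 * i).

Definition cg_rule (f : nat -> nat) : Prop :=
  forall i i', i < i' -> f i = 2 -> f i' = 2 -> exists2 t, i < t < i' & f t = 0.

(* The condition for a digit 2 to be admissible at position j+1. *)
Definition cg_closed (f : nat -> nat) (j : nat) : Prop :=
  forall i, i <= j -> f i = 2 -> exists2 t, i < t <= j & f t = 0.

Definition set_digit (f : nat -> nat) (t v : nat) (i : nat) : nat := if i == t then v else f i.

Lemma cgsumS f j : cgsum f j.+1 = cgsum f j + f j.+1 * fib (2 * j.+1).
Proof. by rewrite /cgsum big_ord_recr. Qed.

Lemma eq_cgsum f g j : (forall i, i <= j -> f i = g i) -> cgsum f j = cgsum g j.
Proof. by move=> fg; apply: eq_bigr => i _; rewrite fg // -ltnS. Qed.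

Lemma leq_term_cgsum f i j : i <= j -> f i * fib (2 * i) <= cgsum f j.
Proof.
move=> le_ij; rewrite /cgsum (bigD1 (Ordinal (le_ij : i < j.+1))) //=; exact: leq_addr.
Qed.

Lemma cgsum_zero_above f a b : (forall i, a < i -> f i = 0) -> a <= b -> cgsum f b = cgsum f a.
Proof.
move=> fz /subnKC <-; elim: (b - a) => [|d IH]; first by rewrite addn0.
by rewrite addnS cgsumS IH fz ?mul0n ?addn0 // ltnS leq_addr.
Qed.

Lemma cgsum_support f a b :
  (forall i, a < i -> f i = 0) -> (forall i, b < i -> f i = 0) -> cgsum f a = cgsum f b.
Proof.
move=> fa fb; case: (leqP a b) => [le_ab|/ltnW le_ba].
  by rewrite (cgsum_zero_above fa le_ab).
by rewrite (cgsum_zero_above fb le_ba).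
Qed.

Lemma cgsum_set_digit_top f t v : cgsum (set_digit f t.+1 v) t.+1 = cgsum f t + v * fib (2 * t.+1).
Proof.
rewrite cgsumS /set_digit eqxx; congr (_ + _); apply: eq_cgsum => i le_it.
by case: eqP => // eq_it; move: le_it; rewrite eq_it ltnn.
Qed.

Lemma cg_closed_down f j : cg_closed f j.+1 -> f j.+1 != 0 -> cg_closed f j.
Proof.
move=> fc fj i le_ij fi; have [t /andP[lt_it le_tj] ft] := fc i (leqW le_ij) fi.
have ne_tj : t != j.+1 by apply: contraNneq fj => <-; rewrite ft.
by exists t => //; lia.
Qed.

Lemma cg_closed_top f j : cg_closed f j -> f j != 2.
Proof. by move=> fc; apply/eqP => /(fc j (leqnn j)) [t]; case: leqP. Qed.

Lemma cg_rule_closed f j : cg_rule f -> f j.+1 = 2 -> cg_closed f j.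
Proof.
by move=> fr fj i le_ij fi; have [t lt_t ft] := fr i j.+1 le_ij fi fj; exists t.
Qed.

Lemma cgsum_positive_run f a j : (forall t, a < t <= j -> 0 < f t) -> a <= j ->
  cgsum f a + fib (2 * j).+1 <= cgsum f j + fib (2 * a).+1.
Proof.
elim: j => [|j IH] fpos; first by rewrite leqn0 => /eqP ->.
rewrite leq_eqVlt ltnS => /orP[/eqP <- // | le_aj].
rewrite cgsumS mulnS add2n fibSS.
have := IH (fun t t_range => fpos t ltac:(lia)) le_aj.
have := leq_pmull (fib (2 * j).+2) (fpos j.+1 ltac:(lia)); lia.
Qed.

Lemma cgsum_lt_closed f j : f 0 = 0 -> cgsum f j < fib (2 * j).+1 -> cg_closed f j.
Proof.
move=> f0 sum_lt i le_ij fi.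
have [/hasP[t] | /hasPn no_zero] := boolP (has (fun t => f t == 0) (iota i.+1 (j - i))).
  by rewrite mem_iota => t_range /eqP ft; exists t => //; lia.
have fpos t : i < t <= j -> 0 < f t by move=> t_range; rewrite lt0n no_zero // mem_iota; lia.
have := cgsum_positive_run fpos le_ij; have := leq_term_cgsum f (leqnn i).
case: i {le_ij no_zero fpos} fi => [|i] fi; first by rewrite f0 in fi.
rewrite fi mulnS add2n => term_le run_le; exfalso.
by have := fibSS (2 * i).+1; have := leq_fib (leqnSn (2 * i).+1); lia.
Qed.

Section Digits.
Variable f : nat -> nat.
Hypothesis f_le2 : forall i, f i <= 2.
Hypothesis f_rule : cg_rule f.

(* Sharp: attained by the digits 1,...,1,2 on (a, j] and, when closed, by 1,...,1. *)
Lemma cgsum_ub a j : (forall i, i <= a -> f i = 0) -> a <= j ->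
  cgsum f j + fib (2 * a).+1 <= fib (2 * j).+2 /\
  (cg_closed f j -> cgsum f j + fib (2 * a).+1 <= fib (2 * j).+1).
Proof.
move=> fz /subnKC <-; elim: (j - a) => [|d [IHopen IHclosed]].
  rewrite addn0; have -> : cgsum f a = 0 by apply: big1 => i _; rewrite fz ?mul0n // -ltnS.
  by split=> //; apply: leq_fib.
rewrite addnS cgsumS mulnS add2n; set b := a + d in IHopen IHclosed *.
have fib3 := fibSS (2 * b).+1; have fib4 := fibSS (2 * b).+2.
have fib_a : fib (2 * a).+1 <= fib (2 * b).+1.
  by apply: leq_fib; rewrite ltnS leq_mul2l leq_addr orbT.
have := f_le2 b.+1; case fb: (f b.+1) => [|[|[|//]]] _; split; try lia.
- move=> fc; have fb0 : f b.+1 != 0 by rewrite fb.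
  by have := IHclosed (cg_closed_down fc fb0); lia.
- by have := IHclosed (cg_rule_closed f_rule fb); lia.
- by move/cg_closed_top; rewrite fb.
Qed.

Lemma cg_closedP a j : (forall i, i <= a -> f i = 0) -> a <= j ->
  cg_closed f j <-> cgsum f j + fib (2 * a).+1 <= fib (2 * j).+1.
Proof.
move=> fz le_aj; split; first exact: (cgsum_ub fz le_aj).2.
move=> sum_le; apply: cgsum_lt_closed; first exact: fz.
by have := fib_gt0 (ltn0Sn (2 * a)); lia.
Qed.

Lemma cgsum_lt_top g j : f 0 = 0 -> f j.+1 < g j.+1 -> cgsum f j.+1 < cgsum g j.+1.
Proof.
move=> f0 lt_fg; have fz i : i <= 0 -> f i = 0 by rewrite leqn0 => /eqP ->.
have [sum_lt _] := cgsum_ub fz (leq0n j).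
have := leq_term_cgsum g (leqnn j.+1); have := leq_mul2r (fib (2 * j.+1)) (f j.+1).+1 (g j.+1).
have fib1 : fib (2 * 0).+1 = 1 by [].
by rewrite lt_fg orbT !cgsumS mulnS add2n mulSn; lia.
Qed.

End Digits.

Lemma cgsum_inj f g N : (forall i, f i <= 2) -> (forall i, g i <= 2) ->
  cg_rule f -> cg_rule g -> f 0 = 0 -> g 0 = 0 ->
  cgsum f N = cgsum g N -> forall i, i <= N -> f i = g i.
Proof.
move=> f_le2 g_le2 f_rule g_rule f0 g0; elim: N => [_ i|N IH sum_eq i].
  by rewrite leqn0 => /eqP ->; rewrite f0 g0.
have top_eq : f N.+1 = g N.+1.
  case: (ltngtP (f N.+1) (g N.+1)) => [lt_fg|lt_gf|//].
    by have := cgsum_lt_top f_le2 f_rule f0 lt_fg; rewrite sum_eq ltnn.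
  by have := cgsum_lt_top g_le2 g_rule g0 lt_gf; rewrite sum_eq ltnn.
rewrite leq_eqVlt ltnS => /orP[/eqP -> // | le_iN]; apply: IH le_iN.
by move: sum_eq; rewrite !cgsumS top_eq => /addIn.
Qed.

Lemma cg_rule_set_digit0 f t : cg_rule f -> cg_rule (set_digit f t 0).
Proof.
rewrite /set_digit => f_rule i i' lt_ii'; case: eqP => // _ fi; case: eqP => // _ fi'.
by have [s lt_s fs] := f_rule i i' lt_ii' fi fi'; exists s => //; case: eqP.
Qed.

Lemma cg_rule_set_digit_top f t : cg_rule f -> cg_closed f t -> (forall i, t < i -> f i = 0) ->
  cg_rule (set_digit f t.+1 2).
Proof.
rewrite /set_digit => f_rule f_closed f_above i i' lt_ii'.
have set_digit_zero s : s <= t -> f s = 0 -> (if s == t.+1 then 2 else f s) = 0.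
  by move=> le_st fs; case: eqP => // eq_s; move: le_st; rewrite eq_s ltnn.
case: eqP => [eq_i _ | _ fi].
  by rewrite f_above ?ifN_eq //; lia.
have le_it : i <= t by case: leqP => // /f_above; rewrite fi.
case: eqP => [eq_i' _ | _ fi'].
  by have [s /andP[lt_is le_st] fs] := f_closed i le_it fi; exists s; [lia | exact: set_digit_zero].
have le_i't : i' <= t by case: leqP => // /f_above; rewrite fi'.
have [s /andP[lt_is lt_si'] fs] := f_rule i i' lt_ii' fi fi'.
by exists s; [lia | apply: set_digit_zero => //; lia].
Qed.

(* [f 0] does not contribute to [cgsum] (F_0 = 0), so it is normalised to 0. *)
Definition cg_rep (n : nat) (f : nat -> nat) : Prop :=
  [/\ forall i, f i <= 2, f 0 = 0, forall i, n < i -> f i = 0, cg_rule f & cgsum f n = n].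

Lemma cg_rep_intro n f t : (forall i, f i <= 2) -> f 0 = 0 -> (forall i, t < i -> f i = 0) ->
  cg_rule f -> cgsum f t = n -> cg_rep n f.
Proof.
move=> f_le2 f0 f_above f_rule sum_n.
have f_above_n i : n < i -> f i = 0.
  move=> lt_ni; apply/eqP; apply: contraLR lt_ni; rewrite -ltnNge -lt0n => fi.
  have le_it : i <= t by case: leqP => // /f_above fi0; rewrite fi0 in fi.
  have := leq_term_cgsum f le_it; have := leq_fib_even_id i.
  by have := leq_pmull (fib (2 * i)) (fi : 0 < f i); lia.
by split=> //; rewrite (cgsum_support f_above_n f_above).
Qed.

Definition ffun_digits N (c : {ffun 'I_N -> 'I_3}) (i : nat) : nat :=
  if i is i'.+1 then (if insub i' is Some j then (c j : nat) else 0) else 0.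

Lemma ffun_digitsS N (c : {ffun 'I_N -> 'I_3}) (i : 'I_N) : ffun_digits c i.+1 = c i.
Proof. by rewrite /= valK. Qed.

Lemma ffun_digits_above N (c : {ffun 'I_N -> 'I_3}) i : N < i -> ffun_digits c i = 0.
Proof. by case: i => //= i; rewrite ltnS => le_Ni; rewrite insubF // ltnNge le_Ni. Qed.

Lemma ffun_digits_le2 N (c : {ffun 'I_N -> 'I_3}) i : ffun_digits c i <= 2.
Proof. by case: i => //= i; case: insub => // j; rewrite -ltnS ltn_ord. Qed.

Lemma cg_value_cgsum N (c : {ffun 'I_N -> 'I_3}) : cg_value c = cgsum (ffun_digits c) N.
Proof.
rewrite /cgsum big_ord_recl muln0 add0n; apply: eq_bigr => i _.
by rewrite lift0 ffun_digitsS.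
Qed.

Lemma cg_validP N (c : {ffun 'I_N -> 'I_3}) : reflect (cg_rule (ffun_digits c)) (cg_valid c).
Proof.
apply: (iffP forallP) => [c_valid [|i] [|i'] // lt_ii' | c_rule i].
- case: (ltnP i N) => [lt_iN|le_Ni]; last by rewrite ffun_digits_above.
  case: (ltnP i' N) => [lt_i'N|le_Ni']; last by rewrite (ffun_digits_above c (i := i'.+1)).
  rewrite (ffun_digitsS c (Ordinal lt_iN)) (ffun_digitsS c (Ordinal lt_i'N)) => ci ci'.
  move: (c_valid (Ordinal lt_iN)) => /forallP /(_ (Ordinal lt_i'N)) /implyP.
  rewrite /= -ltnS lt_ii' ci ci' => /(_ isT) /existsP[t /andP[/andP[lt_it lt_ti'] /eqP ct]].
  by exists t.+1; rewrite ?ffun_digitsS // !ltnS lt_it.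
- apply/forallP => i'; apply/implyP => /andP[/andP[lt_ii' /eqP ci] /eqP ci'].
  have [[|t] // lt_t] := c_rule i.+1 i'.+1 lt_ii'
    (etrans (ffun_digitsS c i) ci) (etrans (ffun_digitsS c i') ci').
  have lt_tN : t < N by move: lt_t (ltn_ord i'); rewrite !ltnS; lia.
  rewrite (ffun_digitsS c (Ordinal lt_tN)) => ct; apply/existsP; exists (Ordinal lt_tN).
  by rewrite ct eqxx andbT; exact: lt_t.
Qed.

Lemma cg_rep_ffun n (c : {ffun 'I_n -> 'I_3}) :
  cg_valid c -> cg_value c = n -> cg_rep n (ffun_digits c).
Proof.
move=> /cg_validP c_rule c_value; split=> //; [exact: ffun_digits_le2 | exact: ffun_digits_above |].
by rewrite -cg_value_cgsum.
Qed.

Lemma cgE n : cg n = if cg_coeffs n is Some c then ffun_digits c else fun=> 0.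
Proof. by apply: functional_extensionality => i; rewrite /cg; case: cg_coeffs. Qed.

(* The candidate c built from f witnesses the [pick], so only uniqueness is used. *)
Lemma cg_char n f : cg_rep n f -> cg n = f.
Proof.
move=> [f_le2 f0 f_above f_rule f_sum].
pose c : {ffun 'I_n -> 'I_3} := [ffun i : 'I_n => inord (f i.+1)].
have c_digits : ffun_digits c = f.
  apply: functional_extensionality => -[|i] //; case: (ltnP i n) => [lt_in|le_ni].
    by rewrite (ffun_digitsS c (Ordinal lt_in)) ffunE inordK // ltnS.
  by rewrite ffun_digits_above ?f_above.
have c_ok : cg_valid c && (cg_value c == n).
  by apply/andP; split; [apply/cg_validP; rewrite c_digits | rewrite cg_value_cgsum c_digits f_sum].
rewrite cgE /cg_coeffs; case: pickP => [d /andP[d_valid /eqP d_value] | /(_ c)]; last first.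
  by rewrite c_ok.
have [d_le2 d0 d_above d_rule d_sum] := cg_rep_ffun d_valid d_value.
apply: functional_extensionality => i; case: (leqP i n) => [le_in | lt_ni].
  by apply: (cgsum_inj d_le2 f_le2 d_rule f_rule d0 f0 _ le_in); rewrite d_sum f_sum.
by rewrite d_above ?f_above.
Qed.

Lemma cg_rep_cg n : (exists i, cg n i != 0) -> cg_rep n (cg n).
Proof.
rewrite cgE /cg_coeffs; case: pickP => [c /andP[c_valid /eqP c_value] _ | _ [//]].
exact: cg_rep_ffun.
Qed.

Lemma cg_support n i : cg n i != 0 -> 0 < i <= n.
Proof.
rewrite cgE; case: cg_coeffs => [c|//]; case: i => [//|i] ci.
by apply: contraTT ci; rewrite -ltnNge negbK => lt_ni; rewrite ffun_digits_above.
Qed.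

Section FibEvenSeq.
Variables (p : pred nat) (n : nat).
Hypothesis p_support : forall i, p i -> 0 < i <= n.

Let s := [seq fib (2 * i) | i <- iota 1 n & p i].

Lemma mem_fib_even_seq i : (fib (2 * i) \in s) = p i.
Proof.
apply/mapP/idP => [[j] | p_i].
  by rewrite mem_filter => /andP[p_j _] /fib_even_inj ->.
by exists i; rewrite // mem_filter p_i mem_iota; have := p_support p_i; lia.
Qed.

Lemma mem_fib_even_seqP x : x \in s -> exists2 i, p i & x = fib (2 * i).
Proof. by move/mapP => [i]; rewrite mem_filter => /andP[p_i _] ->; exists i. Qed.

Lemma is_min_fib_even_seq k : is_min s (fib (2 * k)) <-> p k /\ (forall i, p i -> k <= i).
Proof.
rewrite /is_min mem_fib_even_seq; split=> -[p_k k_min]; split=> //.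
  by move=> i p_i; rewrite -leq_fib_even; apply: k_min; rewrite mem_fib_even_seq.
by move=> _ /mem_fib_even_seqP[i p_i ->]; rewrite leq_fib_even k_min.
Qed.

Lemma is_max_fib_even_seq k : is_max s (fib (2 * k)) <-> p k /\ (forall i, p i -> i <= k).
Proof.
rewrite /is_max mem_fib_even_seq; split=> -[p_k k_max]; split=> //.
  by move=> i p_i; rewrite -leq_fib_even; apply: k_max; rewrite mem_fib_even_seq.
by move=> _ /mem_fib_even_seqP[i p_i ->]; rewrite leq_fib_even k_max.
Qed.

End FibEvenSeq.

Lemma AP k n : A k n <-> cg n k != 0 /\ (forall i, cg n i != 0 -> k <= i).
Proof.
rewrite /A /CG is_min_fib_even_seq; last exact: cg_support.
by split=> [[_ //] | [ck k_min]]; split=> //; have := cg_support ck; lia.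
Qed.

Lemma is_max_CGP n j :
  is_max (CG n) (fib (2 * j)) <-> cg n j != 0 /\ (forall i, cg n i != 0 -> i <= j).
Proof. exact/is_max_fib_even_seq/cg_support. Qed.

Lemma is_max_CG2P n j :
  is_max (CG2 n) (fib (2 * j)) <-> cg n j = 2 /\ (forall i, cg n i = 2 -> i <= j).
Proof.
rewrite /CG2 is_max_fib_even_seq => [|i /eqP ci]; last by apply: cg_support; rewrite ci.
split=> -[cj j_max]; split; try exact/eqP.
  by move=> i ci; apply/j_max/eqP.
by move=> i /eqP; apply: j_max.
Qed.

Lemma A_drop_top_two a t n : a < t -> A a.+1 n ->
  is_max (CG n) (fib (2 * t.+1)) -> is_max (CG2 n) (fib (2 * t.+1)) ->
  exists m, A a.+1 m /\ m + fib (2 * a).+1 <= fib (2 * t).+1 /\ n = m + 2 * fib (2 * t.+1).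
Proof.
move=> lt_at /AP[fk k_min] /is_max_CGP[_ t_max] /is_max_CG2P[ft _].
have [f_le2 f0 f_above f_rule f_sum] := cg_rep_cg (ex_intro _ a.+1 fk).
have f_above_t i : t.+1 < i -> cg n i = 0.
  by move=> lt_ti; apply/eqP; apply: contraTT lt_ti => /t_max; lia.
have f_below i : i <= a -> cg n i = 0.
  by move=> le_ia; apply/eqP; apply: contraTT le_ia => /k_min; lia.
set f := cg n in fk ft k_min f_le2 f0 f_above f_rule f_sum f_above_t f_below.
pose g := set_digit f t.+1 0.
have g_rep : cg_rep (cgsum f t) g.
  apply: (cg_rep_intro (t := t)); rewrite /g /set_digit.
  - by move=> i; case: eqP.
  - exact: f0.
  - by move=> i lt_ti; case: eqP => // ne_i; apply: f_above_t; lia.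
  - exact: cg_rule_set_digit0.
  - by apply: eq_cgsum => i le_it; case: eqP => // eq_i; lia.
exists (cgsum f t); split; last split.
- apply/AP; rewrite (cg_char g_rep) /g /set_digit ifN_eq; last by rewrite eqSS; lia.
  by split=> // i; case: (eqVneq i t.+1) => // _; exact: k_min.
- by apply: (cg_closedP f_le2 f_rule f_below (ltnW lt_at)).1; exact: cg_rule_closed.
- by rewrite -[X in X = _]f_sum (cgsum_support f_above f_above_t) cgsumS ft.
Qed.

Lemma A_add_top_two a t m : a < t -> A a.+1 m -> m + fib (2 * a).+1 <= fib (2 * t).+1 ->
  [/\ A a.+1 (m + 2 * fib (2 * t.+1)),
      is_max (CG (m + 2 * fib (2 * t.+1))) (fib (2 * t.+1))
    & is_max (CG2 (m + 2 * fib (2 * t.+1))) (fib (2 * t.+1))].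
Proof.
move=> lt_at /AP[fk k_min] m_le.
have [f_le2 f0 f_above f_rule f_sum] := cg_rep_cg (ex_intro _ a.+1 fk).
have f_below i : i <= a -> cg m i = 0.
  by move=> le_ia; apply/eqP; apply: contraTT le_ia => /k_min; lia.
have f_above_t i : t < i -> cg m i = 0.
  move=> lt_ti; apply/eqP; apply: contraTT m_le => fi.
  have := leq_term_cgsum (cg m) (proj2 (andP (cg_support fi))); rewrite f_sum.
  have : fib (2 * t).+1 <= fib (2 * i) by apply: leq_fib; lia.
  have := fib_gt0 (ltn0Sn (2 * a)); rewrite -lt0n in fi; have := leq_pmull (fib (2 * i)) fi; lia.
set f := cg m in fk k_min f_le2 f0 f_above f_rule f_sum f_below f_above_t.
have f_sum_t : cgsum f t = m by rewrite (cgsum_support f_above_t f_above).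
have f_closed : cg_closed f t.
  by apply: (cg_closedP f_le2 f_rule f_below (ltnW lt_at)).2; rewrite f_sum_t.
pose h := set_digit f t.+1 2.
have h_above i : t.+1 < i -> h i = 0.
  by rewrite /h /set_digit; case: eqP => [|_] lt_ti; [lia | apply: f_above_t; lia].
have h_rep : cg_rep (m + 2 * fib (2 * t.+1)) h.
  apply: (cg_rep_intro (t := t.+1)) h_above _ _.
  - by move=> i; rewrite /h /set_digit; case: eqP.
  - exact: f0.
  - exact: cg_rule_set_digit_top.
  - by rewrite cgsum_set_digit_top f_sum_t.
have h_max i : h i != 0 -> i <= t.+1 by case: leqP => // /h_above ->.
split; [apply/AP | apply/is_max_CGP | apply/is_max_CG2P]; rewrite (cg_char h_rep).
- rewrite /h /set_digit ifN_eq; last by rewrite eqSS; lia.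
  by split=> // i; case: (eqVneq i t.+1) => [-> _ | _]; [lia | exact: k_min].
- by rewrite /h /set_digit eqxx.
- split; first by rewrite /h /set_digit eqxx.
  by move=> i hi; apply: h_max; rewrite hi.
Qed.

Theorem lemma3p6 (k l : nat) (hk : 1 <= k) (hl : 1 <= l) (n : nat) :
  (A k n /\ is_max (CG n) (fib (2 * k + 2 * l))
         /\ is_max (CG2 n) (fib (2 * k + 2 * l)))
  <->
  (exists m, A k m /\ m <= \sum_(0 <= i < l) fib (2 * k + 2 * i)
             /\ n = m + 2 * fib (2 * k + 2 * l)).
Proof.
case: k hk => // a _; case: l hl => // l _.
have lt_at : a < a + l.+1 by rewrite -addSnnS leq_addr.
have sum_eq := sum_fib_even a l.+1.
have -> : 2 * a.+1 + 2 * l.+1 = 2 * (a + l.+1).+1 by lia.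
set t := a + l.+1 in lt_at sum_eq *.
split=> [[An [max_CG max_CG2]] | [m [Am [m_le ->]]]].
  have [m [Am [m_le ->]]] := A_drop_top_two lt_at An max_CG max_CG2.
  by exists m; split; last split; rewrite // -(leq_add2r (fib (2 * a).+1)) sum_eq.
have [] // := A_add_top_two lt_at Am.
by rewrite -sum_eq leq_add2r.
Qed.
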